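(* Let $M$ be a monoid. Then $\mathbb{X}(M)$ is a strong $M$-partial order.
   Context: A monoid is a semigroup with a two-sided identity $1_M$; by convention, whenever a monoid acts on a set, $1_M$ acts as the identity. An $M$-partial order is a set $X$ with an action of $M$ and a partial order $\leq_X$ such that $x\leq_X y$ implies $ax\leq_X ay$ for all $x,y\in X$, $a\in M$. An $M$-partial order $X$ is strong if for all $y\in X$ and $a\in M$, $\{ax : x\in X,\ x\leq_X y\}=\{x\in X : x\leq_X ay\}$. $\mathbb{X}(M)=\{aM : a\in M\}$ (the set of principal right ideals of $M$), partially ordered by inclusion, with $M$ acting by left multiplication: $b\cdot(aM)=baM$. *)

From Stdlib Require Import ProofIrrelevance FunctionalExtensionality PropExtensionality.
Set Implicit Arguments.

Definition is_monoid (M : Type) (mul : M -> M -> M) (one : M) : Prop :=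
  (forall a b c, mul a (mul b c) = mul (mul a b) c) /\
  (forall a, mul one a = a) /\ (forall a, mul a one = a).

Definition is_action (M X : Type) (mul : M -> M -> M) (one : M)
  (act : M -> X -> X) : Prop :=
  (forall x, act one x = x) /\
  (forall a b x, act (mul a b) x = act a (act b x)).

Definition is_partial_order (X : Type) (le : X -> X -> Prop) : Prop :=
  (forall x, le x x) /\
  (forall x y, le x y -> le y x -> x = y) /\
  (forall x y z, le x y -> le y z -> le x z).

Definition is_M_partial_order (M X : Type) (mul : M -> M -> M) (one : M)
  (act : M -> X -> X) (le : X -> X -> Prop) : Prop :=
  is_action mul one act /\ is_partial_order le /\
  (forall x y a, le x y -> le (act a x) (act a y)).

Definition is_strong_M_partial_order (M X : Type) (mul : M -> M -> M) (one : M)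
  (act : M -> X -> X) (le : X -> X -> Prop) : Prop :=
  is_M_partial_order mul one act le /\
  (forall (y : X) (a : M),
     (fun z => exists x, le x y /\ z = act a x) = (fun z => le z (act a y))).

Definition rideal (M : Type) (mul : M -> M -> M) (a : M) : M -> Prop :=
  fun z => exists m, z = mul a m.

Definition XM (M : Type) (mul : M -> M -> M) : Type :=
  { S : M -> Prop | exists a, S = rideal mul a }.

Definition XM_le (M : Type) (mul : M -> M -> M) (S T : XM mul) : Prop :=
  forall z, proj1_sig S z -> proj1_sig T z.

Definition XM_act_set (M : Type) (mul : M -> M -> M) (b : M) (S : M -> Prop)
  : M -> Prop := fun w => exists z, S z /\ w = mul b z.

Lemma XM_act_principal (M : Type) (mul : M -> M -> M)
  (assoc : forall a b c, mul a (mul b c) = mul (mul a b) c)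
  (b : M) (S : XM mul) :
  exists a, XM_act_set mul b (proj1_sig S) = rideal mul a.
Proof.
destruct S as [S [a ->]]; simpl; exists (mul b a).
apply functional_extensionality; intro w.
apply propositional_extensionality; unfold XM_act_set, rideal; split.
- intros [z [[m ->] ->]]. exists m. apply assoc.
- intros [m ->]. exists (mul a m). split; [exists m; reflexivity | symmetry; apply assoc].
Qed.

(* The action needs associativity (to know b.(aM) is again principal). *)
Definition XM_act (M : Type) (mul : M -> M -> M) (one : M)
  (Hmon : is_monoid mul one) (b : M) (S : XM mul) : XM mul :=
  exist _ (XM_act_set mul b (proj1_sig S))
    (@XM_act_principal M mul (proj1 Hmon) b S).

(* The action of b sends aM to (ba)M, so every operation on X(M) reduces to
   computations with generators.  For strongness, let cM <= a.(bM).  Since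
   c = c1 lies in cM, c = a w with w in bM; then wM <= bM and a.(wM) = (aw)M = cM,
   so cM is the image of an element below bM. *)

From Stdlib Require Import ProofIrrelevance FunctionalExtensionality PropExtensionality.

Lemma pred_ext (T : Type) (P Q : T -> Prop) : (forall z, P z <-> Q z) -> P = Q.
Proof.
intro H; apply functional_extensionality; intro z.
apply propositional_extensionality; apply H.
Qed.

Section SubsetsOfM.

Variables (M : Type) (mul : M -> M -> M).

Lemma XM_act_set_id (one : M) (mul1m : forall a, mul one a = a) (S : M -> Prop) :
  XM_act_set mul one S = S.
Proof.
apply pred_ext; intro w; unfold XM_act_set; split.
- intros [z [Sz ->]]; rewrite mul1m; exact Sz.
- intro Sw; exists w; rewrite mul1m; auto.
Qed.

Lemma XM_act_set_mul (mulA : forall a b c, mul a (mul b c) = mul (mul a b) c)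
  (a b : M) (S : M -> Prop) :
  XM_act_set mul (mul a b) S = XM_act_set mul a (XM_act_set mul b S).
Proof.
apply pred_ext; intro w; unfold XM_act_set; split.
- intros [z [Sz ->]]; exists (mul b z); split.
  + exists z; auto.
  + symmetry; apply mulA.
- intros [u [[z [Sz ->]] ->]]; exists z; auto.
Qed.

Lemma XM_act_set_mono (b : M) (S T : M -> Prop) :
  (forall z, S z -> T z) -> forall w, XM_act_set mul b S w -> XM_act_set mul b T w.
Proof. intros ST w [z [Sz ->]]; exists z; auto. Qed.

Lemma XM_act_set_rideal (mulA : forall a b c, mul a (mul b c) = mul (mul a b) c)
  (a b : M) :
  XM_act_set mul b (rideal mul a) = rideal mul (mul b a).
Proof.
apply pred_ext; intro w; unfold XM_act_set, rideal; split.
- intros [z [[m ->] ->]]; exists m; apply mulA.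
- intros [m ->]; exists (mul a m); split.
  + exists m; reflexivity.
  + symmetry; apply mulA.
Qed.

Lemma rideal_refl (one : M) (mulm1 : forall a, mul a one = a) (a : M) :
  rideal mul a a.
Proof. exists one; symmetry; apply mulm1. Qed.

Lemma rideal_sub (mulA : forall a b c, mul a (mul b c) = mul (mul a b) c)
  (b w : M) : rideal mul b w -> forall z, rideal mul w z -> rideal mul b z.
Proof. intros [m ->] z [n ->]; exists (mul m n); symmetry; apply mulA. Qed.

End SubsetsOfM.

Section PrincipalRightIdeals.

Variables (M : Type) (mul : M -> M -> M) (one : M) (Hmon : is_monoid mul one).

Definition XM_of (a : M) : XM mul := exist _ (rideal mul a) (ex_intro _ a eq_refl).

Lemma XM_val_inj (S T : XM mul) : proj1_sig S = proj1_sig T -> S = T.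
Proof.
destruct S as [S HS], T as [T HT]; simpl; intros ->.
f_equal; apply proof_irrelevance.
Qed.

Lemma XM_le_partial_order : is_partial_order (@XM_le M mul).
Proof.
unfold XM_le; split; [|split].
- auto.
- intros S T ST TS; apply XM_val_inj, pred_ext; split; auto.
- auto.
Qed.

Lemma XM_is_action : is_action mul one (XM_act Hmon).
Proof.
pose proof Hmon as [mulA [mul1m _]]; split.
- intro S; apply XM_val_inj; apply XM_act_set_id, mul1m.
- intros a b S; apply XM_val_inj; apply XM_act_set_mul, mulA.
Qed.

Lemma XM_act_mono (S T : XM mul) (a : M) :
  XM_le S T -> XM_le (XM_act Hmon a S) (XM_act Hmon a T).
Proof. exact (XM_act_set_mono _ _ a _ _). Qed.

Lemma XM_le_act_lift (a : M) (Y Z : XM mul) :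
  XM_le Z (XM_act Hmon a Y) -> exists X, XM_le X Y /\ Z = XM_act Hmon a X.
Proof.
pose proof Hmon as [mulA [_ mulm1]].
destruct Y as [Y [b ->]], Z as [Z [c ->]]; unfold XM_le; simpl; intro cM_sub.
destruct (cM_sub c (rideal_refl _ _ _ mulm1 c)) as [w [bw ->]].
exists (XM_of w); split.
- exact (rideal_sub _ _ mulA _ _ bw).
- apply XM_val_inj; simpl; symmetry; apply XM_act_set_rideal, mulA.
Qed.

End PrincipalRightIdeals.

Theorem lemma2p1 (M : Type) (mul : M -> M -> M) (one : M)
  (Hmon : is_monoid mul one) :
  is_strong_M_partial_order mul one (@XM_act M mul one Hmon) (@XM_le M mul).
Proof.
split; [split; [|split]|].
- apply XM_is_action.
- apply XM_le_partial_order.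
- intros S T a; apply XM_act_mono.
- intros Y a; apply pred_ext; intro Z; split.
  + intros [X [XY ->]]; apply XM_act_mono, XY.
  + apply XM_le_act_lift.
Qed.
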